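(* Let $f\in I_V(\chi^{-c})$ satisfy $f(g\,\iota(h,h))=\chi(\kappa_V(\det h))f(g)$ for all $g\in G(V^\square)$ and $h\in G(V)$. Then $g\mapsto f(\iota(g,\mathrm{id}_V))$ is a class function on $G(V)$, and for every irreducible representation $\pi$ of $G(V)$ the operator $Z_{V,\chi^{-c},\pi}(f)=\sum_{g\in G(V)}f(\iota(g,\mathrm{id}))\pi(g)$ is a scalar operator.
   Context: Let $\mathbb F$ be a finite field of odd cardinality $q$, $\mathbb E/\mathbb F$ of degree $1$ or $2$ with Galois generator $x\mapsto\bar x$; $\mathcal C$ algebraically closed of characteristic not dividing $q$. $(V,\langle\cdot,\cdot\rangle_V)$ is an $\epsilon$-sesquilinear space over $\mathbb E$ (nondegenerate or identically zero form; $\epsilon_V=1$ if $\mathbb E\ne\mathbb F$) with isometry group $G(V)$. $V^\square=V^+\oplus V^-$ with form $\langle v_1,v_2\rangle-\langle w_1,w_2\rangle$ on $v_1^++w_1^-,v_2^++w_2^-$; $V^\Delta=\{v^++v^-\}$; $\iota(g_1,g_2)(v^++w^-)=(g_1v)^++(g_2w)^-$; $P_V$ the stabilizer of $V^\Delta$. For $\chi:\mathbb E^\times\to\mathcal C^\times$, $\chi^{-c}(x)=\chi(\bar x)^{-1}$, and for a character $\mu$, $I_V(\mu)$ is the space of $f:G(V^\square)\to\mathcal C$ with $f(pg)=\mu(\det(p|_{V^\Delta}))f(g)$ for $p\in P_V$ (nondegenerate case), resp. $f(pg)=\mu(\det(p|_{V^\Delta}))\mu^{-c}(\det(p|_{V^\square/V^\Delta}))f(g)$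 (zero-form case). $\kappa_V:\mathbb E^\times\to\mathbb E^\times$ is $\kappa_V(x)=x$ if the form is nondegenerate and $\kappa_V(x)=x/\bar x$ if it is zero. *)

From HB Require Import structures.
From mathcomp Require Import all_boot all_order all_algebra all_field.
Set Implicit Arguments. Unset Strict Implicit. Unset Printing Implicit Defensive.
Import GRing.Theory.
Local Open Scope ring_scope.

(* Conventions: E is a finite field with an involutive field automorphism s
   (x |-> xbar); F is its fixed field, of cardinality q.  V = E^n (column
   vectors); the form is <v,w> = v^T B (s w).  A matrix g acts by v |-> g v. *)

Section Defs.
Variables (E : finFieldType) (s : {rmorphism E -> E}).

Definition qF : nat := #|[set x : E | s x == x]|.

Definition sesq_space (n : nat) (eps : E) (B : 'M[E]_n) : Prop :=
  [/\ eps = 1 \/ eps = -1,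
      (exists x, s x != x) -> eps = 1,
      B^T = eps *: map_mx s B
    & B = 0 \/ B \in unitmx].

Definition isom_group (n : nat) (B : 'M[E]_n) : {set 'M[E]_n} :=
  [set g : 'M[E]_n | (g \in unitmx) && (g^T *m B *m map_mx s g == B)].

Definition sq_form (n : nat) (B : 'M[E]_n) : 'M[E]_(n + n) := block_mx B 0 0 (- B).

Definition iotaV (n : nat) (g1 g2 : 'M[E]_n) : 'M[E]_(n + n) := block_mx g1 0 0 g2.

(* columns span V^Delta = { v^+ + v^- } *)
Definition diag_emb (n : nat) : 'M[E]_(n + n, n) := col_mx 1%:M 1%:M.

(* P_V: stabilizer of V^Delta in G(V^square) *)
Definition P_V (n : nat) (B : 'M[E]_n) : {set 'M[E]_(n + n)} :=
  [set p in isom_group (sq_form B) |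
     (((diag_emb n)^T *m p^T) == (diag_emb n)^T)%MS].

(* det(p|_{V^Delta}) in the basis v |-> v^+ + v^- : p (v,v) = ((a+b)v,(a+b)v) *)
Definition det_restr (n : nat) (p : 'M[E]_(n + n)) : E :=
  \det (ulsubmx p + ursubmx p).

(* det(p | V^square / V^Delta), identifying the quotient with V via
   (x,y) |-> x - y; the induced map is a - c *)
Definition det_quot (n : nat) (p : 'M[E]_(n + n)) : E :=
  \det (ulsubmx p - dlsubmx p).

Variable C : fieldType.

Definition is_char (chi : E -> C) : Prop :=
  (forall x y, x != 0 -> y != 0 -> chi (x * y) = chi x * chi y) /\
  (forall x, x != 0 -> chi x != 0).

Definition cinv (chi : E -> C) : E -> C := fun x => (chi (s x))^-1.

Definition in_IV (n : nat) (B : 'M[E]_n) (mu : E -> C) (f : 'M[E]_(n + n) -> C)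
  : Prop :=
  forall p g, p \in P_V B -> g \in isom_group (sq_form B) ->
    f (p *m g) =
      (if B == 0 then mu (det_restr p) * cinv mu (det_quot p)
       else mu (det_restr p)) * f g.

Definition kappa (n : nat) (B : 'M[E]_n) (x : E) : E :=
  if B == 0 then x / s x else x.

(* representation of the finite group G (a set of invertible matrices closed
   under product) on C^d, in MathComp's convention for mx_representation *)
Definition is_rep (n : nat) (G : {set 'M[E]_n}) (d : nat)
  (rho : 'M[E]_n -> 'M[C]_d) : Prop :=
  rho 1%:M = 1%:M /\
  forall g h, g \in G -> h \in G -> rho (g *m h) = rho g *m rho h.

(* irreducibility, as MathComp's mx_irreducible (mxsimple rho 1%:M) unfolds *)
Definition irred_rep (n : nat) (G : {set 'M[E]_n}) (d : nat)
  (rho : 'M[E]_n -> 'M[C]_d) : Prop :=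
  (0 < d)%N /\
  forall U : 'M[C]_d, (forall g, g \in G -> (U *m rho g <= U)%MS) ->
    U = 0 \/ row_full U.

End Defs.

(** The restriction [phi g := f (iota(g, 1))] is a class function because
    [iota(x g x^-1, 1) = iota(x, x) * iota(g, 1) * iota(x^-1, x^-1)], with
    [iota(x, x)] in [P_V]: the character [chi^{-c}] picked up from the left
    factor cancels the character [chi o kappa_V o det] picked up from the right
    one.  A class-function-weighted sum of the [pi(g)] commutes with every
    [pi(x)], hence is a scalar by Schur's lemma over the algebraically closed
    field [C]. *)

From HB Require Import structures.
From mathcomp Require Import all_boot all_order all_algebra all_field.
Import GRing.Theory.
Local Open Scope ring_scope.
Set Implicit Arguments. Unset Strict Implicit.

Section IsometryGroup.
Variables (E : finFieldType) (s : {rmorphism E -> E}) (m : nat) (B : 'M[E]_m).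
Local Notation G := (isom_group s B).

Lemma isom_group_unit g : g \in G -> g \in unitmx.
Proof. by rewrite inE => /andP[]. Qed.

Lemma isom_group1 : 1%:M \in G.
Proof. by rewrite inE unitmx1 trmx1 map_mx1 mul1mx mulmx1 eqxx. Qed.

Lemma isom_groupM g h : g \in G -> h \in G -> g *m h \in G.
Proof.
rewrite !inE => /andP[ug /eqP eg] /andP[uh /eqP eh].
rewrite unitmx_mul ug uh trmx_mul map_mxM.
by rewrite /= !mulmxA -[h^T *m g^T *m B]mulmxA -[h^T *m (g^T *m B) *m _]mulmxA eg eh.
Qed.

Lemma isom_groupV g : g \in G -> invmx g \in G.
Proof.
rewrite !inE => /andP[ug /eqP eg]; rewrite unitmx_inv ug /=.
have usg : map_mx s g \in unitmx by rewrite map_unitmx.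
apply/eqP; rewrite -{1}eg map_invmx !mulmxA -trmx_mul mulmxV // trmx1 mul1mx.
by rewrite -mulmxA mulmxV // mulmx1.
Qed.

Lemma det_isom_norm1 g : B \in unitmx -> g \in G -> \det g * s (\det g) = 1.
Proof.
move=> uB; rewrite inE => /andP[_ /eqP /(congr1 determinant)].
rewrite !det_mulmx det_tr det_map_mx mulrAC => detgB.
have detB_neq0 : \det B != 0 by rewrite -unitfE -unitmxE.
by apply: (mulIf detB_neq0); rewrite mul1r.
Qed.

End IsometryGroup.

Section DoubledSpace.
Variables (E : finFieldType) (s : {rmorphism E -> E}) (n : nat) (B : 'M[E]_n).

Lemma iotaV_mul (a b c d : 'M[E]_n) :
  iotaV a b *m iotaV c d = iotaV (a *m c) (b *m d).
Proof. by rewrite /iotaV mulmx_block !(mul0mx, mulmx0, addr0, add0r). Qed.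

Lemma iotaV_isom a b : a \in isom_group s B -> b \in isom_group s B ->
  iotaV a b \in isom_group s (sq_form B).
Proof.
rewrite !inE => /andP[ua /eqP ea] /andP[ub /eqP eb].
rewrite /iotaV /sq_form unitmxE det_ublock unitrM -!unitmxE ua ub /=.
rewrite tr_block_mx map_block_mx !trmx0 !map_mx0 !mulmx_block.
by rewrite !(mul0mx, mulmx0, addr0, add0r) mulmxN mulNmx ea eb.
Qed.

Lemma iotaV_diag_in_P_V x : x \in isom_group s B -> iotaV x x \in P_V s B.
Proof.
move=> xG; rewrite inE iotaV_isom //= -trmx_mul /diag_emb /iotaV mul_block_col.
rewrite !(mul0mx, mulmx0, addr0, add0r, mulmx1).
have -> : col_mx x x = col_mx 1%:M 1%:M *m x by rewrite mul_col_mx mul1mx.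
rewrite trmx_mul; apply/eqmxP; apply: eqmxMfull.
by rewrite row_full_unit unitmx_tr (isom_group_unit xG).
Qed.

Lemma det_restr_iotaV_diag (x : 'M[E]_n) : det_restr (iotaV x x) = \det x.
Proof. by rewrite /det_restr /iotaV block_mxKul block_mxKur addr0. Qed.

Lemma det_quot_iotaV_diag (x : 'M[E]_n) : det_quot (iotaV x x) = \det x.
Proof. by rewrite /det_quot /iotaV block_mxKul block_mxKdl subr0. Qed.

End DoubledSpace.

Section Characters.
Variables (E : finFieldType) (C : fieldType) (chi : E -> C).
Hypothesis chi_char : is_char chi.

Lemma char1 : chi 1 = 1.
Proof.
have [chiM chi_neq0] := chi_char.
apply: (mulfI (chi_neq0 1 (oner_neq0 _))).
by rewrite mulr1 -chiM ?oner_neq0 // mulr1.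
Qed.

Lemma charV x : x != 0 -> chi x^-1 = (chi x)^-1.
Proof.
have [chiM chi_neq0] := chi_char => x_neq0.
apply: (mulfI (chi_neq0 x x_neq0)).
by rewrite mulfV ?chi_neq0 // -chiM ?invr_neq0 // mulfV // char1.
Qed.

Variables (s : {rmorphism E -> E}) (n : nat) (B : 'M[E]_n).
Hypothesis s_invol : forall x, s (s x) = x.

(* The characters acquired by [f] under left translation by [iota(x, x)] and
   right translation by [iota(x^-1, x^-1)], where [a = det x]. *)
Lemma cinv_kappa_cancel a : a != 0 -> (B != 0 -> a * s a = 1) ->
  (if B == 0 then cinv s chi a * cinv s (cinv s chi) a else cinv s chi a)
    * chi (kappa s B a^-1) = 1.
Proof.
move=> a_neq0 norm_a; have [chiM chi_neq0] := chi_char.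
have sa_neq0 : s a != 0 by rewrite fmorph_eq0.
rewrite /kappa /cinv; case: eqP => [_ | /eqP B_neq0].
  rewrite s_invol invrK fmorphV invrK mulrC chiM ?invr_neq0 // charV //.
  by rewrite mulrA -(mulrA _ (chi (s a))) mulfV ?chi_neq0 // mulr1 mulVf ?chi_neq0.
have -> : a^-1 = s a by apply: (mulfI a_neq0); rewrite mulfV // norm_a.
by rewrite mulVf ?chi_neq0.
Qed.

End Characters.

Lemma class_fun_restr_iotaV (E : finFieldType) (C : fieldType)
  (s : {rmorphism E -> E}) (n : nat) (B : 'M[E]_n)
  (chi : E -> C) (f : 'M[E]_(n + n) -> C) :
  (forall x, s (s x) = x) ->
  B = 0 \/ B \in unitmx ->
  is_char chi ->
  in_IV s B (cinv s chi) f ->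
  (forall g h, g \in isom_group s (sq_form B) -> h \in isom_group s B ->
     f (g *m iotaV h h) = chi (kappa s B (\det h)) * f g) ->
  forall g x, g \in isom_group s B -> x \in isom_group s B ->
     f (iotaV (x *m g *m invmx x) 1%:M) = f (iotaV g 1%:M).
Proof.
move=> s_invol B0_or_unit chi_char f_IV f_diag g x gG xG.
have xiG := isom_groupV xG; have ux := isom_group_unit xG.
have -> : iotaV (x *m g *m invmx x) 1%:M =
    iotaV x x *m (iotaV g 1%:M *m iotaV (invmx x) (invmx x)).
  by rewrite !iotaV_mul mul1mx mulmxV // mulmxA.
rewrite f_IV ?iotaV_diag_in_P_V ?isom_groupM ?iotaV_isom ?isom_group1 //.
rewrite f_diag ?iotaV_isom ?isom_group1 // mulrA -[RHS]mul1r; congr (_ * _).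
rewrite det_restr_iotaV_diag det_quot_iotaV_diag det_inv.
apply: cinv_kappa_cancel => //; first by rewrite -unitfE -unitmxE.
move=> B_neq0; apply: det_isom_norm1 xG.
by case: B0_or_unit => // B0; rewrite B0 eqxx in B_neq0.
Qed.

Section ClassSum.
Variables (E : finFieldType) (n : nat) (G : {set 'M[E]_n}).
Hypotheses (G_unit : {subset G <= unitmx})
  (GM : forall g h, g \in G -> h \in G -> g *m h \in G)
  (GV : forall g, g \in G -> invmx g \in G).
Variables (C : fieldType) (d : nat) (rho : 'M[E]_n -> 'M[C]_d).
Hypothesis rhoM : forall g h, g \in G -> h \in G -> rho (g *m h) = rho g *m rho h.
Variable phi : 'M[E]_n -> C.
Hypothesis phi_conj :
  forall g x, g \in G -> x \in G -> phi (x *m g *m invmx x) = phi g.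

Lemma conj_mem g x : x \in G -> (x *m g *m invmx x \in G) = (g \in G).
Proof.
move=> xG; apply/idP/idP => [|gG]; last by apply: GM (GV xG); apply: GM.
have ux := G_unit xG.
have {2}-> : g = invmx x *m (x *m g *m invmx x) *m invmx (invmx x).
  by rewrite invmxK !mulmxA mulVmx // mul1mx -mulmxA mulVmx // mulmx1.
by move=> conjG; apply: GM (GV (GV xG)); apply: GM (GV xG) conjG.
Qed.

Lemma class_sum_comm x : x \in G ->
  rho x *m (\sum_(g in G) phi g *: rho g) = (\sum_(g in G) phi g *: rho g) *m rho x.
Proof.
move=> xG; have ux := G_unit xG.
rewrite mulmx_sumr mulmx_suml (reindex (fun g => invmx x *m g *m x)) /=; last first.
  exists (fun g => x *m g *m invmx x) => g _.
    by rewrite !mulmxA mulmxV // mul1mx -mulmxA mulmxV // mulmx1.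
  by rewrite !mulmxA mulVmx // mul1mx -mulmxA mulVmx // mulmx1.
have conjV g : invmx x *m g *m x = invmx x *m g *m invmx (invmx x) by rewrite invmxK.
have conjG g : (invmx x *m g *m x \in G) = (g \in G) by rewrite conjV (conj_mem _ (GV xG)).
apply: eq_big => [g | g]; first exact: conjG.
rewrite conjG => gG; have g'G : invmx x *m g *m x \in G by rewrite conjG.
rewrite -scalemxAr -scalemxAl conjV (phi_conj gG (GV xG)) -conjV.
by rewrite -[rho x *m _]rhoM // !mulmxA mulmxV // mul1mx rhoM.
Qed.

End ClassSum.

Lemma schur_scalar (E : finFieldType) (C : closedFieldType) (n d : nat)
  (G : {set 'M[E]_n}) (rho : 'M[E]_n -> 'M[C]_d) (Z : 'M[C]_d) :
  irred_rep G rho -> (forall g, g \in G -> rho g *m Z = Z *m rho g) ->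
  exists c, Z = c%:M.
Proof.
move=> [d_gt0 irr] Zcomm.
have [c root_c] : exists c, root (char_poly Z) c.
  by apply/closed_rootP; rewrite size_char_poly; case: d d_gt0 rho irr Z Zcomm.
exists c; have eig_c : eigenvalue Z c by rewrite eigenvalue_root_char.
have stable g : g \in G -> (eigenspace Z c *m rho g <= eigenspace Z c)%MS.
  move=> gG; rewrite /eigenspace sub_kermx -mulmxA.
  have -> : rho g *m (Z - c%:M) = (Z - c%:M) *m rho g.
    by rewrite mulmxBl mulmxBr Zcomm // scalar_mxC.
  by rewrite mulmxA mulmx_ker mul0mx.
case: (irr _ stable) => [eig0 | full]; first by move: eig_c; rewrite /eigenvalue eig0 eqxx.
have : (1%:M <= eigenspace Z c)%MS by rewrite sub1mx.
by rewrite /eigenspace sub_kermx mul1mx subr_eq0 => /eqP.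
Qed.

Theorem mainTheorem4 (E : finFieldType) (C : closedFieldType)
  (s : {rmorphism E -> E}) (n : nat) (B : 'M[E]_n) (eps : E)
  (chi : E -> C) (f : 'M[E]_(n + n) -> C) :
  (forall x, s (s x) = x) ->
  odd (qF s) ->
  (qF s)%:R != 0 :> C ->
  sesq_space s eps B ->
  is_char chi ->
  in_IV s B (cinv s chi) f ->
  (forall g h, g \in isom_group s (sq_form B) -> h \in isom_group s B ->
     f (g *m iotaV h h) = chi (kappa s B (\det h)) * f g) ->
  (forall g x, g \in isom_group s B -> x \in isom_group s B ->
     f (iotaV (x *m g *m invmx x) 1%:M) = f (iotaV g 1%:M)) /\
  (forall (d : nat) (rho : 'M[E]_n -> 'M[C]_d),
     is_rep (isom_group s B) rho -> irred_rep (isom_group s B) rho ->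
     exists c : C,
       \sum_(g in isom_group s B) f (iotaV g 1%:M) *: rho g = c%:M).
Proof.
move=> s_invol _ _ [_ _ _ B0_or_unit] chi_char f_IV f_diag.
have class_fun := class_fun_restr_iotaV s_invol B0_or_unit chi_char f_IV f_diag.
split=> // d rho [_ rhoM] irr.
apply: schur_scalar irr _ => x xG; apply: class_sum_comm => //.
- exact: isom_group_unit.
- exact: isom_groupM.
- exact: isom_groupV.
Qed.
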